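(* Let $\mathbb{K}$ be a field, $C$ a coseparable coalgebra, and $P_e(B,C,\psi)$ an $e$-copointed $(P,C)_\psi$-extension with bijective entwining map $\psi$. If there exists a colifting of the translation map $\tilde\tau:C\to P\otimes P$, then the canonical map $\mathrm{can}:P\otimes_BP\to P\otimes C$ is bijective and $P^C_e(B)$ is a principal $C$-coalgebra Galois extension.
   Context: A coalgebra $C$ is coseparable if there is a $(C,C)$-bicolinear map $\delta:C\otimes C\to C$ with $\delta\circ\Delta=\mathrm{id}_C$. An entwining structure $(P,C)_\psi$: algebra $P$, coalgebra $C$, linear $\psi:C\otimes P\to P\otimes C$, $\psi(c\otimes p)=p_\alpha\otimes c^\alpha$, with $\psi(c\otimes pq)=p_\alpha q_\beta\otimes c^{\alpha\beta}$, $\psi(c\otimes1)=1\otimes c$, $p_\alpha\otimes c^\alpha{}_{(1)}\otimes c^\alpha{}_{(2)}=p_{\alpha\beta}\otimes c_{(1)}{}^\beta\otimes c_{(2)}{}^\alpha$, $p_\alpha\varepsilon(c^\alpha)=\varepsilon(c)p$. $P(B,C,\psi)$ (a $(P,C)_\psi$-extension) means $P$ has a right $C$-coaction $\rho^C(p)=p_{(0)}\otimes p_{(1)}$ with $\rho^C(pq)=p_{(0)}\psi(p_{(1)}\otimes q)$ and $B=P^{\mathrm{co}C}=\{b:\rho^C(bp)=b\rho^C(p)\ \forall p\}$; it is $e$-copointed, for a grouplike $e\in C$, if $\rho^C(p)=\psi(e\otimes p)$ for all $p$. The canonical map is $p\otimes_Bp'\mapsto pp'_{(0)}\otimes p'_{(1)}$;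 a colifting of the translation map is a linear $\tilde\tau:C\to P\otimes P$, $c\mapsto c^{\tilde{[1]}}\otimes c^{\tilde{[2]}}$, with $c^{\tilde{[1]}}c^{\tilde{[2]}}{}_{(0)}\otimes c^{\tilde{[2]}}{}_{(1)}=1_P\otimes c$. Writing $\psi^{-1}$ for the inverse, the left $C$-coaction induced by $\psi$ is ${}^{C_\psi}\rho(p)=\psi^{-1}(p\otimes e)$. A strong connection form is a linear $\ell:C\to P\otimes P$ with $\ell(e)=1\otimes1$, $\widetilde{\mathrm{can}}(\ell(c))=1\otimes c$ (where $\widetilde{\mathrm{can}}(p\otimes p')=pp'_{(0)}\otimes p'_{(1)}$), $(P\otimes\rho^C)\circ\ell=(\ell\otimes C)\circ\Delta$ and $({}^{C_\psi}\rho\otimes P)\circ\ell=(C\otimes\ell)\circ\Delta$. An $e$-copointed $C$-coalgebra Galois extension $P^C_e(B)$ (canonical map bijective) is principal if the canonical entwining $\psi_{\mathrm{can}}(c\otimes p)=\mathrm{can}(\mathrm{can}^{-1}(1\otimes c)p)$ is bijective and a strong connection form exists. *)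

(* Abstract (possibly infinite-dimensional) vector spaces over a
   field K are [lmodType K]; tensor products are given by their universal property. *)
From HB Require Import structures.
From mathcomp Require Import all_boot all_algebra.
From Stdlib Require Import ClassicalEpsilon.
Unset Printing Implicit Defensive.
Import GRing.Theory.
Local Open Scope ring_scope.

Definition bilinear_map {K : fieldType} {U V W : lmodType K} (f : U -> V -> W) : Prop :=
  (forall u, linear (f u)) /\ (forall v, linear (fun u => f u v)).

Record tensor {K : fieldType} (U V : lmodType K) := Tensor {
  tsp :> lmodType K;
  tens : U -> V -> tsp;
  tens_bilin : bilinear_map tens;
  tens_ex : forall (W : lmodType K) (f : U -> V -> W), bilinear_map f ->
    exists g : tsp -> W, linear g /\ forall u v, g (tens u v) = f u v;
  tens_uniq : forall (W : lmodType K) (g h : tsp -> W), linear g -> linear h ->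
    (forall u v, g (tens u v) = h (tens u v)) -> g =1 h }.

Record btensor {K : fieldType} {P : algType K} (B : P -> Prop) := BTensor {
  bsp :> lmodType K;
  btens : P -> P -> bsp;
  btens_bilin : bilinear_map btens;
  btens_bal : forall p b q, B b -> btens (p * b) q = btens p (b * q);
  btens_ex : forall (W : lmodType K) (f : P -> P -> W), bilinear_map f ->
    (forall p b q, B b -> f (p * b) q = f p (b * q)) ->
    exists g : bsp -> W, linear g /\ forall p q, g (btens p q) = f p q;
  btens_uniq : forall (W : lmodType K) (g h : bsp -> W), linear g -> linear h ->
    (forall p q, g (btens p q) = h (btens p q)) -> g =1 h }.

Arguments tsp {K U V} _.
Arguments tens {K U V} _ _ _.
Arguments Tensor {K U V} _ _ _ _ _.
Arguments bsp {K P B} _.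
Arguments btens {K P B} _ _ _.

(* The linear map U (x) V -> W induced by a bilinear f (chosen by the universal
   property; meaningful whenever f is bilinear). *)
Definition tlift {K : fieldType} {U V : lmodType K} (T : tensor U V) {W : lmodType K}
  (f : U -> V -> W) : tsp T -> W :=
  epsilon (inhabits (fun _ => 0))
    (fun g : tsp T -> W => linear g /\ forall u v, g (tens T u v) = f u v).

Definition btlift {K : fieldType} {P : algType K} {B : P -> Prop} (T : btensor B)
  {W : lmodType K} (f : P -> P -> W) : bsp T -> W :=
  epsilon (inhabits (fun _ => 0))
    (fun g : bsp T -> W => linear g /\ forall p q, g (btens T p q) = f p q).

Definition lmulT {K : fieldType} {P : algType K} {C : lmodType K} (PC : tensor P C)
  (p0 : P) : tsp PC -> tsp PC :=
  tlift PC (fun r d => tens PC (p0 * r) d).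

(* (C, Delta, eps) is a coalgebra; CCC models C (x) (C (x) C). *)
Definition is_coalgebra {K : fieldType} {C : lmodType K} (CC : tensor C C)
  (CCC : tensor C CC) (Delta : C -> CC) (eps : C -> K^o) : Prop :=
  [/\ linear Delta, linear eps,
   (* (id (x) Delta) o Delta = (Delta (x) id) o Delta, up to associativity *)
   forall c, tlift CC (fun a b => tens CCC a (Delta b)) (Delta c) =
             tlift CC (fun a b => tlift CC (fun x y => tens CCC x (tens CC y b)) (Delta a))
                   (Delta c),
   forall c, tlift CC (fun a b => eps a *: b) (Delta c) = c &
   forall c, tlift CC (fun a b => eps b *: a) (Delta c) = c].

(* Left colinearity:  Delta (delta (c (x) d)) = c_(1) (x) delta (c_(2) (x) d);
   right colinearity: Delta (delta (c (x) d)) = delta (c (x) d_(1)) (x) d_(2). *)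
Definition coseparable {K : fieldType} {C : lmodType K} (CC : tensor C C)
  (Delta : C -> CC) : Prop :=
  exists delta : tsp CC -> C,
  [/\ linear delta,
   forall c d, Delta (delta (tens CC c d)) =
               tlift CC (fun a b => tens CC a (delta (tens CC b d))) (Delta c),
   forall c d, Delta (delta (tens CC c d)) =
               tlift CC (fun a b => tens CC (delta (tens CC c a)) b) (Delta d) &
   forall c, delta (Delta c) = c].

Definition grouplike {K : fieldType} {C : lmodType K} (CC : tensor C C)
  (Delta : C -> CC) (eps : C -> K^o) (e : C) : Prop :=
  Delta e = tens CC e e /\ eps e = 1.

(* (P, C)_psi is an entwining structure; PCC models P (x) (C (x) C). *)
Definition is_entwining {K : fieldType} {P : algType K} {C : lmodType K}
  (CC : tensor C C) (PCC : tensor P CC) (CP : tensor C P) (PC : tensor P C)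
  (Delta : C -> CC) (eps : C -> K^o) (psi : tsp CP -> tsp PC) : Prop :=
  [/\ linear psi,
   (* psi(c (x) pq) = p_a q_b (x) c^{ab} *)
   forall c p q, psi (tens CP c (p * q)) =
     tlift PC (fun pa ca => lmulT PC pa (psi (tens CP ca q))) (psi (tens CP c p)),
   forall c, psi (tens CP c 1) = tens PC 1 c,
   (* p_a (x) c^a_(1) (x) c^a_(2) = p_{ab} (x) c_(1)^b (x) c_(2)^a *)
   forall c p, tlift PC (fun pa ca => tens PCC pa (Delta ca)) (psi (tens CP c p)) =
     tlift CC (fun c1 c2 =>
       tlift PC (fun pa ca =>
         tlift PC (fun pab cb => tens PCC pab (tens CC cb ca)) (psi (tens CP c1 pa)))
         (psi (tens CP c2 p))) (Delta c) &
   (* p_a eps(c^a) = eps(c) p *)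
   forall c p, tlift PC (fun pa ca => eps ca *: pa) (psi (tens CP c p)) = eps c *: p].

(* rho is a right C-coaction on P with rho(pq) = p_(0) psi(p_(1) (x) q). *)
Definition is_entwined_coaction {K : fieldType} {P : algType K} {C : lmodType K}
  (CC : tensor C C) (PCC : tensor P CC) (CP : tensor C P) (PC : tensor P C)
  (Delta : C -> CC) (eps : C -> K^o) (psi : tsp CP -> tsp PC) (rho : P -> tsp PC) : Prop :=
  [/\ linear rho,
   forall p, tlift PC (fun p0 p1 => tlift PC (fun a b => tens PCC a (tens CC b p1)) (rho p0))
                   (rho p) =
             tlift PC (fun p0 p1 => tens PCC p0 (Delta p1)) (rho p),
   forall p, tlift PC (fun p0 p1 => eps p1 *: p0) (rho p) = p &
   forall p q, rho (p * q) = tlift PC (fun p0 p1 => lmulT PC p0 (psi (tens CP p1 q))) (rho p)].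

Definition coinv {K : fieldType} {P : algType K} {C : lmodType K} (PC : tensor P C)
  (rho : P -> tsp PC) (b : P) : Prop :=
  forall p, rho (b * p) = lmulT PC b (rho p).

Definition copointed {K : fieldType} {P : algType K} {C : lmodType K}
  (CP : tensor C P) (PC : tensor P C) (psi : tsp CP -> tsp PC) (rho : P -> tsp PC)
  (e : C) : Prop :=
  forall p, rho p = psi (tens CP e p).

Definition cantilde {K : fieldType} {P : algType K} {C : lmodType K} (PP : tensor P P)
  (PC : tensor P C) (rho : P -> tsp PC) : tsp PP -> tsp PC :=
  tlift PP (fun p p' => lmulT PC p (rho p')).

Definition can {K : fieldType} {P : algType K} {C : lmodType K} {B : P -> Prop}
  (PBP : btensor B) (PC : tensor P C) (rho : P -> tsp PC) : bsp PBP -> tsp PC :=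
  btlift PBP (fun p p' => lmulT PC p (rho p')).

Definition colifting {K : fieldType} {P : algType K} {C : lmodType K} (PP : tensor P P)
  (PC : tensor P C) (rho : P -> tsp PC) (tau : C -> tsp PP) : Prop :=
  linear tau /\ forall c, cantilde PP PC rho (tau c) = tens PC 1 c.

Definition brmul {K : fieldType} {P : algType K} {B : P -> Prop} (PBP : btensor B)
  (p : P) : bsp PBP -> bsp PBP :=
  btlift PBP (fun a b => btens PBP a (b * p)).

Definition psi_can {K : fieldType} {P : algType K} {C : lmodType K} {B : P -> Prop}
  (PBP : btensor B) (CP : tensor C P) (PC : tensor P C) (rho : P -> tsp PC)
  (canInv : tsp PC -> bsp PBP) : tsp CP -> tsp PC :=
  tlift CP (fun c p => can PBP PC rho (brmul PBP p (canInv (tens PC 1 c)))).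

(* strong connection form, relative to the inverse psiinv of the entwining;
   PPC models P (x) (P (x) C), CPP models C (x) (P (x) P). *)
Definition strong_connection {K : fieldType} {P : algType K} {C : lmodType K}
  (CC : tensor C C) (PP : tensor P P) (PC : tensor P C) (CP : tensor C P)
  (PPC : tensor P PC) (CPP : tensor C PP) (Delta : C -> CC) (rho : P -> tsp PC)
  (e : C) (psiinv : tsp PC -> tsp CP) (l : C -> tsp PP) : Prop :=
  [/\ linear l,
   l e = tens PP 1 1,
   forall c, cantilde PP PC rho (l c) = tens PC 1 c,
   (* (P (x) rho) o l = (l (x) C) o Delta *)
   forall c, tlift PP (fun a b => tens PPC a (rho b)) (l c) =
     tlift CC (fun c1 c2 => tlift PP (fun a b => tens PPC a (tens PC b c2)) (l c1)) (Delta c) &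
   (* (^{C_psi}rho (x) P) o l = (C (x) l) o Delta, with ^{C_psi}rho(p) = psi^{-1}(p (x) e) *)
   forall c, tlift PP (fun a b =>
       tlift CP (fun c' a' => tens CPP c' (tens PP a' b)) (psiinv (tens PC a e))) (l c) =
     tlift CC (fun c1 c2 => tens CPP c1 (l c2)) (Delta c)].

Definition principal {K : fieldType} {P : algType K} {C : lmodType K}
  (CC : tensor C C) (PP : tensor P P) (PC : tensor P C) (CP : tensor C P)
  (PPC : tensor P PC) (CPP : tensor C PP) {B : P -> Prop} (PBP : btensor B)
  (Delta : C -> CC) (rho : P -> tsp PC) (e : C) : Prop :=
  exists canInv : tsp PC -> bsp PBP,
  [/\ cancel (can PBP PC rho) canInv, cancel canInv (can PBP PC rho),
      copointed CP PC (psi_can PBP CP PC rho canInv) rho e &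
      exists psiinv : tsp PC -> tsp CP,
      [/\ cancel (psi_can PBP CP PC rho canInv) psiinv,
          cancel psiinv (psi_can PBP CP PC rho canInv) &
          exists l : C -> tsp PP, strong_connection CC PP PC CP PPC CPP Delta rho e psiinv l]].

From mathcomp Require Import all_boot all_algebra.
From Stdlib Require Import ClassicalEpsilon FunctionalExtensionality.
Import GRing.Theory.
Local Open Scope ring_scope.

(* Coseparability provides a cointegral gam c d := eps (delta (c (x) d)), with
   gam c_(1) c_(2) = eps c and c_(1) gam c_(2) d = delta (c (x) d) = gam c d_(1) d_(2).
   Averaging against gam turns the colifting tau into a strong connection.
   First normalise tau so that it sends e to 1 (x) 1; then make it right colinear
   by the averaging p |-> p_(0) gam p_(1) c of its second factor, and left colinear
   by the averaging p |-> gam c p_(-1) p_(0) of its first factor, where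
   p_(-1) (x) p_(0) = psi^-1 (p (x) e) is the left coaction induced by psi.
   The resulting strong connection sconn yields the inverse
   p (x) c |-> p sconn(c)^[1] (x)_B sconn(c)^[2] of can; since psi is copointed,
   the canonical entwining is psi itself, hence bijective. *)

Section LinearMaps.
Context {K : fieldType}.

Lemma linD {U V : lmodType K} {f : U -> V} : linear f -> forall x y, f (x + y) = f x + f y.
Proof. by move=> H x y; have := H 1 x y; rewrite !scale1r. Qed.

Lemma lin0 {U V : lmodType K} {f : U -> V} : linear f -> f 0 = 0.
Proof.
move=> H; have := linD H 0 0; rewrite addr0 => /(congr1 (fun z => z - f 0)).
by rewrite subrr addrK => <-.
Qed.

Lemma linZ {U V : lmodType K} {f : U -> V} : linear f -> forall a x, f (a *: x) = a *: f x.
Proof. by move=> H a x; rewrite -[a *: x]addr0 H lin0 // addr0. Qed.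

Lemma linN {U V : lmodType K} {f : U -> V} : linear f -> forall x, f (- x) = - f x.
Proof. by move=> H x; rewrite -scaleN1r linZ // scaleN1r. Qed.

Lemma linB {U V : lmodType K} {f : U -> V} : linear f -> forall x y, f (x - y) = f x - f y.
Proof. by move=> H x y; rewrite linD // linN. Qed.

Lemma lin_id {U : lmodType K} : linear (fun x : U => x).
Proof. by []. Qed.

Lemma lin_comp {U V W : lmodType K} {g : V -> W} {h : U -> V} :
  linear g -> linear h -> linear (fun x => g (h x)).
Proof. by move=> Hg Hh a x y; rewrite Hh Hg. Qed.

Lemma lin_comp_fst {A B X W : lmodType K} (F : A -> B -> W) y (h : X -> A) :
  linear (fun z => F z y) -> linear h -> linear (fun x => F (h x) y).
Proof. exact: lin_comp. Qed.

Lemma lin_add {U V : lmodType K} {g h : U -> V} :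
  linear g -> linear h -> linear (fun x => g x + h x).
Proof.
move=> Hg Hh a x y; rewrite Hg Hh scalerDr -!addrA; congr (_ + _).
by rewrite addrCA.
Qed.

Lemma lin_scale {U V : lmodType K} (k : K) {h : U -> V} :
  linear h -> linear (fun x => k *: h x).
Proof. by move=> Hh a x y; rewrite Hh scalerDr !scalerA mulrC. Qed.

Lemma lin_scale_by {U V : lmodType K} (v : V) {h : U -> K^o} :
  linear h -> linear (fun x => (h x : K) *: v).
Proof. by move=> Hh a x y; rewrite Hh scalerDl scalerA. Qed.

Lemma lin_lmul {P : algType K} {U : lmodType K} (q : P) {h : U -> P} :
  linear h -> linear (fun x => q * h x).
Proof. by move=> Hh a x y; rewrite Hh mulrDr scalerAr. Qed.

Lemma lin_rmul {P : algType K} {U : lmodType K} (q : P) {h : U -> P} :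
  linear h -> linear (fun x => h x * q).
Proof. by move=> Hh a x y; rewrite Hh mulrDl scalerAl. Qed.

Lemma lin_scaler {U : lmodType K} (k : K) : linear ( *:%R k : U -> U).
Proof. exact: (lin_scale k lin_id). Qed.

Lemma lin_mulr_l {P : algType K} (q : P) : linear ( *%R q).
Proof. exact: (lin_lmul q lin_id). Qed.

Lemma lin_mulr_r {P : algType K} (q : P) : linear (fun x : P => x * q).
Proof. exact: (lin_rmul q lin_id). Qed.

End LinearMaps.

Section TensorLift.
Context {K : fieldType} {U V : lmodType K} (T : tensor U V).

Lemma tlift_spec {W : lmodType K} {f : U -> V -> W} : bilinear_map f ->
  linear (tlift T f) /\ forall u v, tlift T f (tens T u v) = f u v.
Proof.
move=> Hf; rewrite /tlift; case: (@tens_ex _ _ _ T _ _ Hf) => g Hg.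
exact: (@epsilon_spec _ (inhabits (fun _ : tsp T => (0 : W)))
  (fun g0 => linear g0 /\ forall u v, g0 (tens T u v) = f u v) (ex_intro _ g Hg)).
Qed.

Lemma lin_tlift {W : lmodType K} {f : U -> V -> W} : bilinear_map f -> linear (tlift T f).
Proof. by case/tlift_spec. Qed.

Lemma tlift_tens {W : lmodType K} {f : U -> V -> W} u v : bilinear_map f ->
  tlift T f (tens T u v) = f u v.
Proof. by case/tlift_spec => _ ->. Qed.

Lemma tens_ext {W : lmodType K} {g h : tsp T -> W} : linear g -> linear h ->
  (forall u v, g (tens T u v) = h (tens T u v)) -> forall x, g x = h x.
Proof. exact: (@tens_uniq _ _ _ T). Qed.

Lemma lin_tens_l v : linear (fun u => tens T u v).
Proof. by case: (@tens_bilin _ _ _ T) => _; apply. Qed.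

Lemma lin_tens_r u : linear (tens T u).
Proof. by case: (@tens_bilin _ _ _ T) => H _; apply: H. Qed.

Lemma tensZl (k : K) u v : tens T (k *: u) v = k *: tens T u v.
Proof. by rewrite (linZ (lin_tens_l v)). Qed.

Lemma tensZr (k : K) u v : tens T u (k *: v) = k *: tens T u v.
Proof. by rewrite (linZ (lin_tens_r u)). Qed.

Lemma lin_tens_lcomp {X : lmodType K} v (h : X -> U) :
  linear h -> linear (fun x => tens T (h x) v).
Proof. by move=> Hh; apply: (lin_comp (lin_tens_l v) Hh). Qed.

Lemma lin_tens_rcomp {X : lmodType K} u (h : X -> V) :
  linear h -> linear (fun x => tens T u (h x)).
Proof. by move=> Hh; apply: (lin_comp (lin_tens_r u) Hh). Qed.

Lemma eq_tlift {W : lmodType K} {f g : U -> V -> W} :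
  (forall u v, f u v = g u v) -> tlift T f = tlift T g.
Proof.
move=> H; have -> // : f = g.
by apply: functional_extensionality => u; apply: functional_extensionality.
Qed.

Lemma congr_tlift {W : lmodType K} (f g : U -> V -> W) x y :
  (forall u v, f u v = g u v) -> x = y -> tlift T f x = tlift T g y.
Proof. by move=> /eq_tlift -> ->. Qed.

Lemma tlift_of_lin {W : lmodType K} {G : tsp T -> W} : linear G ->
  forall x, tlift T (fun u v => G (tens T u v)) x = G x.
Proof.
move=> HG; have Hb : bilinear_map (fun u v => G (tens T u v)).
  by split=> [u|v]; apply: lin_comp => //; [apply: lin_tens_r | apply: lin_tens_l].
by apply: tens_ext => //; [apply: lin_tlift | move=> u v; rewrite tlift_tens].
Qed.

Lemma tlift_comp {W W' : lmodType K} {f : U -> V -> W} {G : W -> W'} :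
  bilinear_map f -> linear G ->
  forall x, G (tlift T f x) = tlift T (fun u v => G (f u v)) x.
Proof.
move=> Hf HG; have Hb : bilinear_map (fun u v => G (f u v)).
  by case: Hf => H1 H2; split=> [u|v]; apply: lin_comp.
apply: tens_ext => [||u v]; last by rewrite !tlift_tens.
- by apply: lin_comp => //; apply: lin_tlift.
- exact: lin_tlift.
Qed.

Lemma lin_tlift_fun {X W : lmodType K} {F : X -> U -> V -> W} y :
  (forall x, bilinear_map (F x)) -> (forall u v, linear (fun x => F x u v)) ->
  linear (fun x => tlift T (F x) y).
Proof.
move=> Hb Hl a x1 x2.
pose h z := a *: tlift T (F x1) z + tlift T (F x2) z.
have Hh : linear h by apply: lin_add; [apply: lin_scale|]; apply: lin_tlift.
apply: (tens_ext (lin_tlift (Hb _)) Hh) => u v.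
by rewrite /h !tlift_tens //; apply: Hl.
Qed.

Lemma lin_tlift_arg {X W : lmodType K} {f : U -> V -> W} {h : X -> tsp T} :
  bilinear_map f -> linear h -> linear (fun x => tlift T f (h x)).
Proof. by move=> Hf; apply: lin_comp; apply: lin_tlift. Qed.

End TensorLift.

Section BalancedTensorLift.
Context {K : fieldType} {P : algType K} {B : P -> Prop} (T : btensor B).

Definition balanced {W : lmodType K} (f : P -> P -> W) :=
  forall p b q, B b -> f (p * b) q = f p (b * q).

Lemma btlift_spec {W : lmodType K} {f : P -> P -> W} : bilinear_map f -> balanced f ->
  linear (btlift T f) /\ forall p q, btlift T f (btens T p q) = f p q.
Proof.
move=> Hf Hbal; rewrite /btlift; case: (@btens_ex _ _ _ T _ _ Hf Hbal) => g Hg.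
exact: (@epsilon_spec _ (inhabits (fun _ : bsp T => (0 : W)))
  (fun g0 => linear g0 /\ forall p q, g0 (btens T p q) = f p q) (ex_intro _ g Hg)).
Qed.

Lemma btens_ext {W : lmodType K} {g h : bsp T -> W} : linear g -> linear h ->
  (forall p q, g (btens T p q) = h (btens T p q)) -> forall x, g x = h x.
Proof. exact: (@btens_uniq _ _ _ T). Qed.

Lemma btens_balanced p b q : B b -> btens T (p * b) q = btens T p (b * q).
Proof. exact: (@btens_bal _ _ _ T). Qed.

Lemma lin_btens_l q : linear (fun p => btens T p q).
Proof. by case: (@btens_bilin _ _ _ T) => _; apply. Qed.

Lemma lin_btens_r p : linear (btens T p).
Proof. by case: (@btens_bilin _ _ _ T) => H _; apply: H. Qed.

Lemma lin_btens_lcomp {X : lmodType K} q (h : X -> P) :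
  linear h -> linear (fun x => btens T (h x) q).
Proof. by move=> Hh; apply: (lin_comp (lin_btens_l q) Hh). Qed.

Lemma lin_btens_rcomp {X : lmodType K} p (h : X -> P) :
  linear h -> linear (fun x => btens T p (h x)).
Proof. by move=> Hh; apply: (lin_comp (lin_btens_r p) Hh). Qed.

Lemma lin_btlift_fun {X W : lmodType K} {F : X -> P -> P -> W} y :
  (forall x, bilinear_map (F x)) -> (forall x, balanced (F x)) ->
  (forall u v, linear (fun x => F x u v)) -> linear (fun x => btlift T (F x) y).
Proof.
move=> Hb Hbal Hl a x1 x2.
have L x : linear (btlift T (F x)) by case: (btlift_spec (Hb x) (Hbal x)).
have E x p q : btlift T (F x) (btens T p q) = F x p q.
  by case: (btlift_spec (Hb x) (Hbal x)).
pose h z := a *: btlift T (F x1) z + btlift T (F x2) z.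
have Hh : linear h by apply: lin_add; [apply: lin_scale|]; apply: L.
by apply: (btens_ext (L _) Hh) => u v; rewrite /h !E; apply: Hl.
Qed.

End BalancedTensorLift.

Create HintDb linear.

Ltac lin_base := solve [ assumption
  | match goal with H : forall _, _ |- _ => apply: H end
  | auto with linear ].

Ltac lin := first [lin_base | cbv beta; match goal with
 | |- GRing.linear_for _ (fun x => x) => apply: lin_id
 | |- GRing.linear_for _ (tlift _ _) => apply: lin_tlift; bilin
 | |- GRing.linear_for _ (fun x => tlift _ _ _) =>
     first [ apply: lin_tlift_arg; [bilin | lin]
           | apply: lin_tlift_fun; [intro; bilin | intros; lin] ]
 | |- GRing.linear_for _ (fun x => _ + _) => apply: lin_add; lin
 | |- GRing.linear_for _ (fun x => tens _ _ _) =>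
     first [ apply: lin_tens_rcomp; lin | apply: lin_tens_lcomp; lin ]
 | |- GRing.linear_for _ (fun x => _ * _) =>
     first [ apply: lin_lmul; lin | apply: lin_rmul; lin ]
 | |- GRing.linear_for _ (fun x => _ *: _) =>
     first [ apply: lin_scale; lin | apply: lin_scale_by; lin ]
 | |- GRing.linear_for _ (fun x => ?g _) => apply: (lin_comp (g := g)); [lin_base | lin]
 | |- GRing.linear_for _ (fun x => _ _ _) => apply: lin_comp_fst; [lin_base | lin]
 end]
with bilin := cbv beta; split=> [?|?]; lin.

Ltac side_lin := try solve [ bilin | lin
  | repeat match goal with |- forall _, _ => intro end; first [bilin | lin] ].

Ltac tlift_beta := rewrite tlift_tens; [|bilin].

(* [Hint Resolve] would use [simple apply], which fails to unify the MathComp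
   structure instances occurring in these statements. *)
#[export] Hint Extern 1 (GRing.linear_for _ _) =>
  first [ apply: lin_id | apply: lin_scaler | apply: lin_mulr_l
        | apply: lin_mulr_r | apply: lin_tens_l | apply: lin_tens_r
        | apply: lin_btens_l | apply: lin_btens_r ] : linear.
#[export] Hint Extern 1 (GRing.linear_for _ (fun _ => btens _ _ _)) =>
  first [apply: lin_btens_lcomp; lin | apply: lin_btens_rcomp; lin] : linear.

Section TensorLiftAlgebra.
Context {K : fieldType} {U V : lmodType K} (T : tensor U V).

Lemma tlift_swap {U' V' W : lmodType K} (T' : tensor U' V')
  (F : U -> V -> U' -> V' -> W) x y :
  (forall a b, bilinear_map (F a b)) ->
  (forall b c d, linear (fun a => F a b c d)) ->
  (forall a c d, linear (fun b => F a b c d)) ->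
  tlift T (fun a b => tlift T' (F a b) y) x =
  tlift T' (fun c d => tlift T (fun a b => F a b c d) x) y.
Proof.
move=> HF H1 H2.
have Hb c d : bilinear_map (fun a b => F a b c d).
  by split; [move=> a; exact: H2 | move=> b; exact: H1].
have Hb2 : bilinear_map (fun a b => tlift T' (F a b) y).
  split=> [a|b]; apply: lin_tlift_fun.
  - by move=> b; apply: HF.
  - by move=> u v; apply: H2.
  - by move=> a; apply: HF.
  - by move=> u v; apply: H1.
move: x; apply: tens_ext.
- exact: lin_tlift.
- apply: lin_tlift_fun; last by move=> c d; apply: lin_tlift.
  move=> x; split=> [c|d]; apply: lin_tlift_fun => //.
  + by move=> a b; case: (HF a b) => Ha _; apply: Ha.
  + by move=> a b; case: (HF a b) => _ Ha; apply: Ha.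
move=> a b; rewrite tlift_tens //; congr (tlift T' _ y).
by apply: functional_extensionality => c; apply: functional_extensionality => d; rewrite tlift_tens.
Qed.

Lemma tlift_scale (k : K) x : tlift T (fun u v => k *: tens T u v) x = k *: x.
Proof. by move: x; apply: tens_ext; side_lin; move=> u v; tlift_beta. Qed.

Lemma tlift_id x : tlift T (fun u v => tens T u v) x = x.
Proof. by move: x; apply: tens_ext; side_lin; move=> u v; tlift_beta. Qed.

End TensorLiftAlgebra.

Section LeftMultiplication.
Context {K : fieldType} {P : algType K} {C : lmodType K} (PC : tensor P C).

Lemma lmulT_lin p : linear (lmulT PC p).
Proof. by rewrite /lmulT; apply: lin_tlift; bilin. Qed.
#[local] Hint Resolve lmulT_lin : linear.

Lemma lin_lmulT_fun {X : lmodType K} (h : X -> P) w :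
  linear h -> linear (fun x => lmulT PC (h x) w).
Proof. by move=> Hh; rewrite /lmulT; lin. Qed.

Lemma lmulT_tens p a c : lmulT PC p (tens PC a c) = tens PC (p * a) c.
Proof. by rewrite /lmulT; tlift_beta. Qed.

Lemma lmulTM p q w : lmulT PC (p * q) w = lmulT PC p (lmulT PC q w).
Proof.
by move: w; apply: tens_ext; side_lin; move=> u v; rewrite !lmulT_tens mulrA.
Qed.

Lemma lmulT1 w : lmulT PC 1 w = w.
Proof. by move: w; apply: tens_ext; side_lin; move=> u v; rewrite lmulT_tens mul1r. Qed.

End LeftMultiplication.

#[export] Hint Resolve lmulT_lin : linear.
#[export] Hint Extern 1 (GRing.linear_for _ (fun _ => lmulT _ _ _)) =>
  apply: lin_lmulT_fun; lin : linear.

Section RightMultiplication.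
Context {K : fieldType} {P : algType K} {B : P -> Prop} (PBP : btensor B).

Lemma brmul_balanced p : balanced (B := B) (fun a b => btens PBP a (b * p)).
Proof. by move=> a b q Hb; rewrite btens_balanced // mulrA. Qed.

Lemma brmul_spec p : linear (brmul PBP p) /\
  forall a b, brmul PBP p (btens PBP a b) = btens PBP a (b * p).
Proof. by rewrite /brmul; apply: btlift_spec; [bilin | apply: brmul_balanced]. Qed.

Lemma brmul_lin p : linear (brmul PBP p).
Proof. by case: (brmul_spec p). Qed.

Lemma brmul_btens p a b : brmul PBP p (btens PBP a b) = btens PBP a (b * p).
Proof. by case: (brmul_spec p) => _ ->. Qed.

Lemma lin_brmul_fun {X : lmodType K} (h : X -> P) x :
  linear h -> linear (fun y => brmul PBP (h y) x).
Proof.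
move=> Hh; rewrite /brmul.
by apply: lin_btlift_fun => [y|y|u v]; [bilin | apply: brmul_balanced | lin].
Qed.

End RightMultiplication.

#[export] Hint Resolve brmul_lin : linear.
#[export] Hint Extern 1 (GRing.linear_for _ (fun _ => brmul _ _ _)) =>
  apply: lin_brmul_fun; lin : linear.

Section PrincipalExtension.
Variables (K : fieldType) (P : algType K) (C : lmodType K)
  (CC : tensor C C) (CCC : tensor C CC) (CP : tensor C P) (PC : tensor P C)
  (PP : tensor P P) (PCC : tensor P CC) (PPC : tensor P PC) (CPP : tensor C PP)
  (Delta : C -> tsp CC) (eps : C -> K^o) (psi : tsp CP -> tsp PC) (rho : P -> tsp PC)
  (e : C) (PBP : btensor (coinv PC rho)).

Hypotheses (Delta_lin : linear Delta) (eps_lin : linear eps)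
  (coassoc : forall c, tlift CC (fun a b => tens CCC a (Delta b)) (Delta c) =
     tlift CC (fun a b => tlift CC (fun x y => tens CCC x (tens CC y b)) (Delta a)) (Delta c))
  (counitl : forall c, tlift CC (fun a b => eps a *: b) (Delta c) = c)
  (counitr : forall c, tlift CC (fun a b => eps b *: a) (Delta c) = c).

Lemma tlift_counitl {W : lmodType K} (h : C -> W) c : linear h ->
  tlift CC (fun a b => eps a *: h b) (Delta c) = h c.
Proof.
move=> Hh; rewrite -{2}(counitl c) (tlift_comp _ (G := h)); side_lin.
by apply: congr_tlift => // a b; rewrite linZ.
Qed.

Lemma tlift_counitr {W : lmodType K} (h : C -> W) c : linear h ->
  tlift CC (fun a b => eps b *: h a) (Delta c) = h c.
Proof.
move=> Hh; rewrite -{2}(counitr c) (tlift_comp _ (G := h)); side_lin.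
by apply: congr_tlift => // a b; rewrite linZ.
Qed.

Lemma coassoc3 {W : lmodType K} (F : C -> C -> C -> W) c :
  (forall a b, linear (F a b)) -> (forall a c, linear (fun b => F a b c)) ->
  (forall b c, linear (fun a => F a b c)) ->
  tlift CC (fun c1 c2 => tlift CC (fun d1 d2 => F d1 d2 c2) (Delta c1)) (Delta c) =
  tlift CC (fun c1 c2 => tlift CC (fun d1 d2 => F c1 d1 d2) (Delta c2)) (Delta c).
Proof.
move=> H1 H2 H3.
have := congr1 (tlift CCC (fun a t => tlift CC (F a) t)) (coassoc c).
rewrite !(tlift_comp _ (G := tlift CCC _)); side_lin.
under eq_tlift => a b do [rewrite tlift_tens; side_lin].
under [in RHS]eq_tlift => a b do [rewrite (tlift_comp _ (G := tlift CCC _)); side_lin].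
under [in RHS]eq_tlift => a b do [under eq_tlift => x y do [rewrite !tlift_tens; side_lin]].
by move=> ->.
Qed.

Variable delta : tsp CC -> C.
Hypotheses (delta_lin : linear delta)
  (delta_colinl : forall c d, Delta (delta (tens CC c d)) =
     tlift CC (fun a b => tens CC a (delta (tens CC b d))) (Delta c))
  (delta_colinr : forall c d, Delta (delta (tens CC c d)) =
     tlift CC (fun a b => tens CC (delta (tens CC c a)) b) (Delta d))
  (delta_Delta : forall c, delta (Delta c) = c).

Local Notation gam c d := (eps (delta (tens CC c d))).

Lemma cointegral_Delta {W : lmodType K} (v : W) c :
  tlift CC (fun a b => gam a b *: v) (Delta c) = eps c *: v.
Proof.
rewrite (tlift_of_lin _ (G := fun w => (eps (delta w) : K) *: v)); last by lin.
by rewrite delta_Delta.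
Qed.

Lemma tlift_cointegrall {W : lmodType K} (h : C -> W) c d : linear h ->
  tlift CC (fun c1 c2 => gam c2 d *: h c1) (Delta c) = h (delta (tens CC c d)).
Proof.
move=> Hh; rewrite -(tlift_counitr h (delta (tens CC c d)) Hh) delta_colinl.
rewrite (tlift_comp _ (G := tlift CC _)); side_lin.
by apply: congr_tlift => // a b; tlift_beta.
Qed.

Lemma tlift_cointegralr {W : lmodType K} (h : C -> W) c d : linear h ->
  tlift CC (fun d1 d2 => gam c d1 *: h d2) (Delta d) = h (delta (tens CC c d)).
Proof.
move=> Hh; rewrite -(tlift_counitl h (delta (tens CC c d)) Hh) delta_colinr.
rewrite (tlift_comp _ (G := tlift CC _)); side_lin.
by apply: congr_tlift => // a b; tlift_beta.
Qed.

Hypotheses (Delta_e : Delta e = tens CC e e) (eps_e : eps e = 1).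

Lemma cointegral_ee : gam e e = 1.
Proof. by rewrite -Delta_e delta_Delta eps_e. Qed.

Hypotheses (psi_lin : linear psi)
  (psi_mul : forall c p q, psi (tens CP c (p * q)) =
     tlift PC (fun pa ca => lmulT PC pa (psi (tens CP ca q))) (psi (tens CP c p)))
  (psi_1 : forall c, psi (tens CP c 1) = tens PC 1 c)
  (psi_Delta : forall c p,
     tlift PC (fun pa ca => tens PCC pa (Delta ca)) (psi (tens CP c p)) =
     tlift CC (fun c1 c2 =>
       tlift PC (fun pa ca =>
         tlift PC (fun pab cb => tens PCC pab (tens CC cb ca)) (psi (tens CP c1 pa)))
         (psi (tens CP c2 p))) (Delta c)).
Hypotheses (rho_lin : linear rho)
  (rho_coassoc : forall p,
     tlift PC (fun p0 p1 => tlift PC (fun a b => tens PCC a (tens CC b p1)) (rho p0)) (rho p) =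
     tlift PC (fun p0 p1 => tens PCC p0 (Delta p1)) (rho p))
  (rho_counit : forall p, tlift PC (fun p0 p1 => eps p1 *: p0) (rho p) = p)
  (rhoM : forall p q,
     rho (p * q) = tlift PC (fun p0 p1 => lmulT PC p0 (psi (tens CP p1 q))) (rho p))
  (rho_psi : forall p, rho p = psi (tens CP e p)).

Lemma rho_coassoc3 {W : lmodType K} (G : P -> C -> C -> W) p :
  (forall a b, linear (G a b)) -> (forall a c, linear (fun b => G a b c)) ->
  (forall b c, linear (fun a => G a b c)) ->
  tlift PC (fun p0 p1 => tlift PC (fun a b => G a b p1) (rho p0)) (rho p) =
  tlift PC (fun p0 p1 => tlift CC (G p0) (Delta p1)) (rho p).
Proof.
move=> H1 H2 H3.
have := congr1 (tlift PCC (fun a t => tlift CC (G a) t)) (rho_coassoc p).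
rewrite !(tlift_comp _ (G := tlift PCC _)); side_lin.
under [in RHS]eq_tlift => a b do [rewrite tlift_tens; side_lin].
under eq_tlift => a b do [rewrite (tlift_comp _ (G := tlift PCC _)); side_lin].
by under eq_tlift => a b do [under eq_tlift => x y do [rewrite !tlift_tens; side_lin]].
Qed.

Lemma rho1 : rho 1 = tens PC 1 e.
Proof. by rewrite rho_psi psi_1. Qed.

(* Averaging of the C-factor of P (x) C against gam _ c; on rho p it is the
   right colinear projection p |-> p_(0) gam p_(1) c. *)
Local Notation avgr c w := (tlift PC (fun p0 p1 => gam p1 c *: p0) w).

Lemma rho_avgr c p : rho (avgr c (rho p)) =
  tlift CC (fun c1 c2 => tens PC (avgr c1 (rho p)) c2) (Delta c).
Proof.
rewrite (tlift_comp _ (G := rho)); side_lin.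
transitivity (tlift PC (fun p0 p1 =>
    tlift PC (fun a x => gam p1 c *: tens PC a x) (rho p0)) (rho p)).
  by apply: congr_tlift => // p0 p1; rewrite linZ // tlift_scale.
rewrite (rho_coassoc3 (fun a x y => gam y c *: tens PC a x)); side_lin.
under eq_tlift => p0 p1 do [rewrite (tlift_cointegrall (tens PC p0)); side_lin].
under [in RHS]eq_tlift => c1 c2 do [rewrite (tlift_comp _ (G := fun z => tens PC z c2)); side_lin].
rewrite tlift_swap; side_lin; apply: congr_tlift => // p0 p1.
under eq_tlift => c1 c2 do rewrite tensZl.
by rewrite (tlift_cointegralr (tens PC p0)); side_lin.
Qed.

Lemma avgr_lmulT s w : avgr e (lmulT PC s w) = s * avgr e w.
Proof.
move: w; apply: tens_ext; side_lin; move=> a c.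
by rewrite lmulT_tens !tlift_tens; side_lin; rewrite scalerAr.
Qed.

Lemma rho_avgr_e p : rho (avgr e (rho p)) = tens PC (avgr e (rho p)) e.
Proof. by rewrite rho_avgr Delta_e tlift_tens; side_lin. Qed.

Lemma coinv_rho b : rho b = tens PC b e -> coinv PC rho b.
Proof. by move=> Hb p; rewrite rhoM Hb tlift_tens; side_lin; rewrite rho_psi. Qed.

Variable phi : tsp PC -> tsp CP.
Hypotheses (psiK : cancel psi phi) (phiK : cancel phi psi).

Lemma phi_lin : linear phi.
Proof. by move=> a x y; rewrite -{1}(phiK x) -{1}(phiK y) -psi_lin psiK. Qed.
#[local] Hint Resolve phi_lin : linear.

Lemma phi_tens1 c : phi (tens PC 1 c) = tens CP c 1.
Proof. by rewrite -psi_1 psiK. Qed.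

(* lcoact p = p_(-1) (x) p_(0) is the left coaction induced by psi, and avgl
   averages its C-factor against gam c _. *)
Local Notation lcoact p := (phi (tens PC p e)).
Local Notation avgl c w := (tlift CP (fun d q => gam c d *: q) w).
Local Notation avgl_tens c z w := (tlift CP (fun d q => gam c d *: tens PC q z) w).

(* The averaging avgl transported to P (x) C along psi. *)
Definition avglPCC c :=
  tlift PCC (fun a yz => tlift CC (fun y z => avgl_tens c z (phi (tens PC a y))) yz).

Definition avglPC c w := avglPCC c (tlift PC (fun p d => tens PCC p (Delta d)) w).

Lemma avglPCC_lin c : linear (avglPCC c).
Proof. by rewrite /avglPCC; lin. Qed.
#[local] Hint Resolve avglPCC_lin : linear.

Lemma avglPC_lin c : linear (avglPC c).
Proof. by rewrite /avglPC; lin. Qed.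
#[local] Hint Resolve avglPC_lin : linear.

Lemma avglPCC_tens c a y z :
  avglPCC c (tens PCC a (tens CC y z)) = avgl_tens c z (phi (tens PC a y)).
Proof. by rewrite /avglPCC; tlift_beta; tlift_beta. Qed.

Lemma avglPC_psi c f q : avglPC c (psi (tens CP f q)) =
  tlift CC (fun f1 f2 => gam c f1 *: psi (tens CP f2 q)) (Delta f).
Proof.
rewrite /avglPC psi_Delta (tlift_comp _ (G := avglPCC c)); side_lin.
apply: congr_tlift => // c1 c2.
rewrite (tlift_comp _ (G := avglPCC c)); side_lin.
under eq_tlift => pa ca do [rewrite (tlift_comp _ (G := avglPCC c)); side_lin].
under eq_tlift => pa ca do [under eq_tlift => pab cb do rewrite avglPCC_tens].
have avgl_phi z w : tlift PC (fun a b => avgl_tens c z (phi (tens PC a b))) w =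
    avgl_tens c z (phi w).
  by move: w; apply: tens_ext; side_lin; move=> a b; tlift_beta.
under eq_tlift => pa ca do [rewrite avgl_phi psiK tlift_tens; side_lin].
by rewrite tlift_scale.
Qed.

Lemma avglPC_1 c1 c2 : avglPC c1 (tens PC 1 c2) =
  tlift CC (fun y z => gam c1 y *: tens PC 1 z) (Delta c2).
Proof.
rewrite /avglPC tlift_tens; side_lin; rewrite /avglPCC tlift_tens; side_lin.
by apply: congr_tlift => // y z; rewrite phi_tens1 tlift_tens; side_lin.
Qed.

Lemma psi_avgl_lcoact c x : tlift CP (fun f q =>
    tlift CC (fun f1 f2 => gam c f1 *: psi (tens CP f2 q)) (Delta f)) (lcoact x) =
  tens PC (avgl c (lcoact x)) e.
Proof.
under eq_tlift => f q do rewrite -avglPC_psi.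
have avglPC_psi_lift w :
    tlift CP (fun f q => avglPC c (psi (tens CP f q))) w = avglPC c (psi w).
  by move: w; apply: tens_ext; side_lin; move=> a b; tlift_beta.
rewrite avglPC_psi_lift phiK /avglPC tlift_tens; side_lin.
rewrite Delta_e avglPCC_tens (tlift_comp _ (G := fun z => tens PC z e)); side_lin.
by apply: congr_tlift => // d q; rewrite tensZl.
Qed.

Lemma lcoact_avgl c x : lcoact (avgl c (lcoact x)) =
  tlift CC (fun d1 d2 => tens CP d1 (avgl d2 (lcoact x))) (Delta c).
Proof.
apply: (can_inj psiK); rewrite phiK (tlift_comp _ (G := psi)); side_lin.
under [in RHS]eq_tlift => d1 d2 do
  [rewrite (tlift_comp _ (G := fun q => psi (tens CP d1 q))); side_lin].
under [in RHS]eq_tlift => d1 d2 do [under eq_tlift => f q do rewrite tensZr (linZ psi_lin)].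
rewrite tlift_swap; side_lin; rewrite -psi_avgl_lcoact; apply: congr_tlift => // f q.
by rewrite (tlift_cointegrall (fun d => psi (tens CP d q)))
  ?(tlift_cointegralr (fun d => psi (tens CP d q))); side_lin.
Qed.

Local Notation cant := (cantilde PP PC rho).

Lemma cantilde_tens a b : cant (tens PP a b) = lmulT PC a (rho b).
Proof. by rewrite /cantilde; tlift_beta. Qed.

Lemma cantilde_lin : linear cant.
Proof. by rewrite /cantilde; lin. Qed.
#[local] Hint Resolve cantilde_lin : linear.

(* Right multiplication on P (x) C through psi: (p (x) c) y = p psi(c (x) y). *)
Local Notation rmulPC y w := (tlift PC (fun pa ca => lmulT PC pa (psi (tens CP ca y))) w).

Lemma lmulT_avgl c x y :
  lmulT PC (avgl c (lcoact x)) (rho y) = avglPC c (lmulT PC x (rho y)).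
Proof.
have lmulT_rho : lmulT PC x (rho y) = tlift CP (fun f q => psi (tens CP f (q * y))) (lcoact x).
  under [in RHS]eq_tlift => f q do rewrite psi_mul.
  have rmulPC_psi w : tlift CP (fun f q => rmulPC y (psi (tens CP f q))) w = rmulPC y (psi w).
    by move: w; apply: tens_ext; side_lin; move=> a b; tlift_beta.
  by rewrite rmulPC_psi phiK tlift_tens; side_lin; rewrite rho_psi.
rewrite lmulT_rho (tlift_comp _ (G := avglPC c)); side_lin.
under [in RHS]eq_tlift => f q do rewrite avglPC_psi.
under [in RHS]eq_tlift => f q do [under eq_tlift => f1 f2 do rewrite psi_mul].
transitivity (rmulPC y (tens PC (avgl c (lcoact x)) e)).
  by rewrite tlift_tens; side_lin; rewrite rho_psi.
rewrite -psi_avgl_lcoact (tlift_comp _ (G := tlift PC _)); side_lin.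
apply: congr_tlift => // f q; rewrite (tlift_comp _ (G := tlift PC _)); side_lin.
by apply: congr_tlift => // f1 f2; rewrite linZ; side_lin.
Qed.

Variable tau : C -> tsp PP.
Hypotheses (tau_lin : linear tau) (cantilde_tau : forall c, cant (tau c) = tens PC 1 c).

(* Since cant (1 (x) 1) = 1 (x) e, the correction term lies in the kernel of cant. *)
Definition ntau c := tau c + eps c *: (tens PP 1 1 - tau e).

Lemma ntau_lin : linear ntau.
Proof. by rewrite /ntau; lin. Qed.
#[local] Hint Resolve ntau_lin : linear.

Lemma cantilde_ntau c : cant (ntau c) = tens PC 1 c.
Proof.
rewrite /ntau (linD cantilde_lin) (linZ cantilde_lin) (linB cantilde_lin).
by rewrite cantilde_tau cantilde_tens rho1 lmulT_tens mul1r cantilde_tau subrr scaler0 addr0.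
Qed.

Lemma ntau_e : ntau e = tens PP 1 1.
Proof. by rewrite /ntau eps_e scale1r addrC subrK. Qed.

Definition rconn c :=
  tlift CC (fun c1 c2 => tlift PP (fun a b => tens PP a (avgr c2 (rho b))) (ntau c1)) (Delta c).

Lemma rconn_lin : linear rconn.
Proof. by rewrite /rconn; lin. Qed.
#[local] Hint Resolve rconn_lin : linear.

Lemma mul_avgr_cantilde d z w :
  tlift PP (fun a b => tens PC (a * avgr d (rho b)) z) w =
  tlift PC (fun p c => gam c d *: tens PC p z) (cant w).
Proof.
move: w; apply: tens_ext; side_lin; move=> a b.
rewrite tlift_tens; side_lin; rewrite cantilde_tens.
rewrite (tlift_comp _ (G := fun x => a * x)); side_lin.
rewrite (tlift_comp _ (G := fun x => tens PC x z)); side_lin.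
rewrite /lmulT (tlift_comp _ (G := tlift PC _)); side_lin.
apply: congr_tlift => // p c; tlift_beta.
by rewrite -scalerAr tensZl.
Qed.

Lemma cantilde_rconn c : cant (rconn c) = tens PC 1 c.
Proof.
rewrite /rconn (tlift_comp _ (G := cant)); side_lin.
under eq_tlift => c1 c2 do [rewrite (tlift_comp _ (G := cant)); side_lin].
under eq_tlift => c1 c2 do [under eq_tlift => a b do rewrite cantilde_tens rho_avgr].
under eq_tlift => c1 c2 do
  [under eq_tlift => a b do [rewrite (tlift_comp _ (G := lmulT PC a)); side_lin]].
under eq_tlift => c1 c2 do
  [under eq_tlift => a b do [under eq_tlift => d1 d2 do rewrite lmulT_tens]].
under eq_tlift => c1 c2 do [rewrite tlift_swap; side_lin].
under eq_tlift => c1 c2 do [under eq_tlift => d1 d2 do rewrite mul_avgr_cantilde cantilde_ntau].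
under eq_tlift => c1 c2 do [under eq_tlift => d1 d2 do [rewrite tlift_tens; side_lin]].
rewrite -(coassoc3 (fun a b c => gam a b *: tens PC 1 c)); side_lin.
under eq_tlift => c1 c2 do rewrite cointegral_Delta.
by rewrite (tlift_counitl (tens PC 1)); side_lin.
Qed.

Lemma rconn_rcolinear d : tlift PP (fun a b => tens PPC a (rho b)) (rconn d) =
  tlift CC (fun d1 d2 => tlift PP (fun a b => tens PPC a (tens PC b d2)) (rconn d1)) (Delta d).
Proof.
rewrite /rconn (tlift_comp _ (G := tlift PP _)); side_lin.
under eq_tlift => c1 c2 do [rewrite (tlift_comp _ (G := tlift PP _)); side_lin].
under eq_tlift => c1 c2 do
  [under eq_tlift => a b do [rewrite tlift_tens; side_lin; rewrite rho_avgr]].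
under eq_tlift => c1 c2 do
  [under eq_tlift => a b do [rewrite (tlift_comp _ (G := tens PPC a)); side_lin]].
under eq_tlift => c1 c2 do [rewrite tlift_swap; side_lin].
under [in RHS]eq_tlift => d1 d2 do [rewrite (tlift_comp _ (G := tlift PP _)); side_lin].
under [in RHS]eq_tlift => d1 d2 do
  [under eq_tlift => c1 c2 do [rewrite (tlift_comp _ (G := tlift PP _)); side_lin]].
under [in RHS]eq_tlift => d1 d2 do
  [under eq_tlift => c1 c2 do [under eq_tlift => a b do [rewrite tlift_tens; side_lin]]].
by rewrite (coassoc3 (fun c1 x y =>
  tlift PP (fun a b => tens PPC a (tens PC (avgr x (rho b)) y)) (ntau c1))); side_lin.
Qed.

Definition sconn c := tlift CC (fun c1 c2 =>
  tlift PP (fun x y => tens PP (avgl c1 (lcoact x)) y) (rconn c2)) (Delta c).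

Lemma sconn_lin : linear sconn.
Proof. by rewrite /sconn; lin. Qed.
#[local] Hint Resolve sconn_lin : linear.

Lemma sconn_e : sconn e = tens PP 1 1.
Proof.
rewrite /sconn Delta_e tlift_tens; side_lin; rewrite {1}/rconn Delta_e tlift_tens; side_lin.
rewrite ntau_e tlift_tens; side_lin; rewrite tlift_tens; side_lin.
by rewrite rho1 phi_tens1 !tlift_tens; side_lin; rewrite cointegral_ee !scale1r.
Qed.

Lemma cantilde_sconn c : cant (sconn c) = tens PC 1 c.
Proof.
rewrite /sconn (tlift_comp _ (G := cant)); side_lin.
under eq_tlift => c1 c2 do [rewrite (tlift_comp _ (G := cant)); side_lin].
under eq_tlift => c1 c2 do
  [under eq_tlift => x y do rewrite cantilde_tens lmulT_avgl -cantilde_tens].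
have avglPC_cant c1 w :
    tlift PP (fun x y => avglPC c1 (cant (tens PP x y))) w = avglPC c1 (cant w).
  by move: w; apply: tens_ext; side_lin; move=> a b; tlift_beta.
under eq_tlift => c1 c2 do rewrite avglPC_cant cantilde_rconn avglPC_1.
rewrite -(coassoc3 (fun a b c => gam a b *: tens PC 1 c)); side_lin.
under eq_tlift => c1 c2 do rewrite cointegral_Delta.
by rewrite (tlift_counitl (tens PC 1)); side_lin.
Qed.

Lemma avgl_rconn_rcolinear c1 d :
  tlift PP (fun x y => tens PPC (avgl c1 (lcoact x)) (rho y)) (rconn d) =
  tlift CC (fun d1 d2 => tlift PP (fun a b =>
    tens PPC (avgl c1 (lcoact a)) (tens PC b d2)) (rconn d1)) (Delta d).
Proof.
transitivity (tlift PPC (fun a w => tens PPC (avgl c1 (lcoact a)) w)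
    (tlift PP (fun a b => tens PPC a (rho b)) (rconn d))).
  rewrite (tlift_comp _ (G := tlift PPC _)); side_lin.
  by apply: congr_tlift => // a b; tlift_beta.
rewrite rconn_rcolinear (tlift_comp _ (G := tlift PPC _)); side_lin.
apply: congr_tlift => // d1 d2; rewrite (tlift_comp _ (G := tlift PPC _)); side_lin.
by apply: congr_tlift => // a b; tlift_beta.
Qed.

Lemma sconn_rcolinear c : tlift PP (fun a b => tens PPC a (rho b)) (sconn c) =
  tlift CC (fun c1 c2 => tlift PP (fun a b => tens PPC a (tens PC b c2)) (sconn c1)) (Delta c).
Proof.
rewrite /sconn (tlift_comp _ (G := tlift PP _)); side_lin.
under eq_tlift => c1 c2 do [rewrite (tlift_comp _ (G := tlift PP _)); side_lin].
under eq_tlift => c1 c2 do [under eq_tlift => a b do [rewrite tlift_tens; side_lin]].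
under eq_tlift => c1 c2 do rewrite avgl_rconn_rcolinear.
under [in RHS]eq_tlift => d1 d2 do [rewrite (tlift_comp _ (G := tlift PP _)); side_lin].
under [in RHS]eq_tlift => d1 d2 do
  [under eq_tlift => c1 c2 do [rewrite (tlift_comp _ (G := tlift PP _)); side_lin]].
under [in RHS]eq_tlift => d1 d2 do
  [under eq_tlift => c1 c2 do [under eq_tlift => a b do [rewrite tlift_tens; side_lin]]].
by rewrite (coassoc3 (fun x1 x2 c2 => tlift PP (fun x y =>
  tens PPC (avgl x1 (lcoact x)) (tens PC y c2)) (rconn x2))); side_lin.
Qed.

Lemma sconn_lcolinear c : tlift PP (fun a b =>
    tlift CP (fun c' a' => tens CPP c' (tens PP a' b)) (lcoact a)) (sconn c) =
  tlift CC (fun c1 c2 => tens CPP c1 (sconn c2)) (Delta c).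
Proof.
rewrite /sconn (tlift_comp _ (G := tlift PP _)); side_lin.
under eq_tlift => c1 c2 do [rewrite (tlift_comp _ (G := tlift PP _)); side_lin].
under eq_tlift => c1 c2 do [under eq_tlift => x y do [rewrite tlift_tens; side_lin;
  rewrite lcoact_avgl (tlift_comp _ (G := tlift CP _)); side_lin]].
under eq_tlift => c1 c2 do
  [under eq_tlift => x y do [under eq_tlift => d1 d2 do [rewrite tlift_tens; side_lin]]].
under eq_tlift => c1 c2 do [rewrite tlift_swap; side_lin].
rewrite (coassoc3 (fun c1 d1 d2 => tlift PP (fun x y =>
  tens CPP c1 (tens PP (avgl d1 (lcoact x)) y)) (rconn d2))); side_lin.
apply: congr_tlift => // c1 c2; rewrite (tlift_comp _ (G := tens CPP c1)); side_lin.
by apply: congr_tlift => // d1 d2; rewrite (tlift_comp _ (G := tens CPP c1)); side_lin.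
Qed.

Lemma sconn_psi_avgr c : tlift CC (fun c1 c2 =>
    tlift PP (fun a b => tens PP (avgr e (psi (tens CP c1 a))) b) (sconn c2)) (Delta c) =
  sconn c.
Proof.
pose N := tlift CPP (fun c' w =>
  tlift PP (fun a b => tens PP (avgr e (psi (tens CP c' a))) b) w).
transitivity (N (tlift CC (fun c1 c2 => tens CPP c1 (sconn c2)) (Delta c))).
  rewrite /N (tlift_comp _ (G := tlift CPP _)); side_lin.
  by apply: congr_tlift => // c1 c2; tlift_beta.
rewrite -sconn_lcolinear /N (tlift_comp _ (G := tlift CPP _)); side_lin.
under eq_tlift => a b do [rewrite (tlift_comp _ (G := tlift CPP _)); side_lin].
under eq_tlift => a b do [under eq_tlift => c' a' do [rewrite !tlift_tens; side_lin]].
have avgr_psi b w : tlift CP (fun c' a' => tens PP (avgr e (psi (tens CP c' a'))) b) w =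
    tens PP (avgr e (psi w)) b.
  by move: w; apply: tens_ext; side_lin; move=> u v; tlift_beta.
under eq_tlift => a b do
  [rewrite avgr_psi phiK tlift_tens; side_lin; rewrite cointegral_ee scale1r].
by rewrite tlift_id.
Qed.

(* In q_(0) sconn(q_(1))^[1] (x) sconn(q_(1))^[2] the first factor may be replaced
   by its coinvariant projection avgr e (rho _). *)
Lemma lmul_sconn_avgr {W : lmodType K} (Th : P -> P -> W) q :
  (forall x, linear (Th x)) -> (forall y, linear (fun x => Th x y)) ->
  tlift PC (fun q0 q1 => tlift PP (fun a b => Th (q0 * a) b) (sconn q1)) (rho q) =
  tlift PC (fun q0 q1 =>
    tlift PP (fun a b => Th (avgr e (rho (q0 * a))) b) (sconn q1)) (rho q).
Proof.
move=> HT1 HT2.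
under eq_tlift => q0 q1 do rewrite -(sconn_psi_avgr q1).
under eq_tlift => q0 q1 do [rewrite (tlift_comp _ (G := tlift PP _)); side_lin].
under eq_tlift => q0 q1 do
  [under eq_tlift => c1 c2 do [rewrite (tlift_comp _ (G := tlift PP _)); side_lin]].
under eq_tlift => q0 q1 do
  [under eq_tlift => c1 c2 do [under eq_tlift => a b do [rewrite tlift_tens; side_lin]]].
rewrite -(rho_coassoc3 (fun s c1 c2 => tlift PP (fun a b =>
  Th (s * avgr e (psi (tens CP c1 a))) b) (sconn c2))); side_lin.
apply: congr_tlift => // q0 q1; rewrite tlift_swap; side_lin.
apply: congr_tlift => // a b.
rewrite rhoM (tlift_comp _ (G := tlift PC (fun p0 p1 => gam p1 e *: p0))); side_lin.
under [in RHS]eq_tlift => s c do rewrite avgr_lmulT.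
by rewrite (tlift_comp _ (G := fun z => Th z b)); side_lin.
Qed.

Lemma mul_sconn c : tlift PP (fun a b => a * b) (sconn c) = eps c *: 1.
Proof.
have counit_lmulT a w : tlift PC (fun p d => eps d *: p) (lmulT PC a w) =
    a * tlift PC (fun p d => eps d *: p) w.
  by move: w; apply: tens_ext; side_lin; move=> p d; rewrite lmulT_tens !tlift_tens;
    side_lin; rewrite scalerAr.
have counit_cant w : tlift PC (fun p d => eps d *: p) (cant w) = tlift PP (fun a b => a * b) w.
  by move: w; apply: tens_ext; side_lin; move=> a b; rewrite cantilde_tens counit_lmulT
    rho_counit tlift_tens; side_lin.
by rewrite -counit_cant cantilde_sconn tlift_tens; side_lin.
Qed.

Lemma can_balanced : balanced (B := coinv PC rho) (fun p p' => lmulT PC p (rho p')).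
Proof. by move=> p b q Hb; rewrite Hb lmulTM. Qed.

Lemma can_spec : linear (can PBP PC rho) /\
  forall p q, can PBP PC rho (btens PBP p q) = lmulT PC p (rho q).
Proof. by rewrite /can; apply: btlift_spec; [bilin | exact: can_balanced]. Qed.

Lemma can_lin : linear (can PBP PC rho).
Proof. by case: can_spec. Qed.
#[local] Hint Resolve can_lin : linear.

Lemma can_btens p q : can PBP PC rho (btens PBP p q) = lmulT PC p (rho q).
Proof. by case: can_spec => _ ->. Qed.

Definition can_inv (w : tsp PC) : bsp PBP :=
  tlift PC (fun p c => tlift PP (fun a b => btens PBP (p * a) b) (sconn c)) w.

Lemma can_inv_lin : linear can_inv.
Proof. by rewrite /can_inv; lin. Qed.
#[local] Hint Resolve can_inv_lin : linear.

Lemma can_invK w : can PBP PC rho (can_inv w) = w.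
Proof.
move: w; apply: tens_ext; side_lin; move=> p c.
rewrite /can_inv tlift_tens; side_lin.
rewrite (tlift_comp _ (G := can PBP PC rho)); side_lin.
under eq_tlift => a b do rewrite can_btens lmulTM.
transitivity (lmulT PC p (cant (sconn c))).
  by rewrite /cantilde (tlift_comp _ (G := lmulT PC p)); side_lin.
by rewrite cantilde_sconn lmulT_tens mulr1.
Qed.

Lemma canK x : can_inv (can PBP PC rho x) = x.
Proof.
move: x; apply: btens_ext; side_lin; move=> p q.
rewrite can_btens.
have can_inv_lmulT w : can_inv (lmulT PC p w) = tlift PC (fun q0 q1 =>
    tlift PP (fun a b => btens PBP (p * (q0 * a)) b) (sconn q1)) w.
  move: w; apply: tens_ext; side_lin; move=> q0 q1.
  rewrite lmulT_tens /can_inv !tlift_tens; side_lin.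
  by apply: congr_tlift => // a b; rewrite mulrA.
rewrite can_inv_lmulT (lmul_sconn_avgr (fun x b => btens PBP (p * x) b)); side_lin.
under eq_tlift => q0 q1 do [under eq_tlift => a b do
  [rewrite btens_balanced; last by apply: coinv_rho; apply: rho_avgr_e]].
transitivity (btens PBP p (tlift PC (fun q0 q1 =>
    tlift PP (fun a b => avgr e (rho (q0 * a)) * b) (sconn q1)) (rho q))).
  rewrite (tlift_comp _ (G := btens PBP p)); side_lin.
  by apply: congr_tlift => // q0 q1; rewrite (tlift_comp _ (G := btens PBP p)); side_lin.
congr (btens PBP p _); rewrite -(lmul_sconn_avgr (fun x b => x * b)); side_lin.
under eq_tlift => q0 q1 do [under eq_tlift => a b do rewrite -mulrA].
under eq_tlift => q0 q1 do [rewrite -(tlift_comp _ (G := fun z => q0 * z)); side_lin].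
under eq_tlift => q0 q1 do rewrite mul_sconn -scalerAr mulr1.
exact: rho_counit.
Qed.

Lemma lmulT_rmulPC y a w : lmulT PC a (rmulPC y w) = rmulPC y (lmulT PC a w).
Proof.
move: w; apply: tens_ext; side_lin; move=> p c.
by rewrite lmulT_tens !tlift_tens; side_lin; rewrite lmulTM.
Qed.

Lemma psi_canE w : psi_can PBP CP PC rho can_inv w = psi w.
Proof.
rewrite /psi_can; move: w; apply: tens_ext; side_lin; move=> c p.
rewrite tlift_tens; side_lin; rewrite /can_inv tlift_tens; side_lin.
rewrite (tlift_comp _ (G := brmul PBP p)); side_lin.
rewrite (tlift_comp _ (G := can PBP PC rho)); side_lin.
under eq_tlift => a b do
  rewrite brmul_btens can_btens mul1r rhoM lmulT_rmulPC -cantilde_tens.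
have rmulPC_cant w : tlift PP (fun a b => rmulPC p (cant (tens PP a b))) w = rmulPC p (cant w).
  by move: w; apply: tens_ext; side_lin; move=> u v; tlift_beta.
by rewrite rmulPC_cant cantilde_sconn tlift_tens; side_lin; rewrite lmulT1.
Qed.

Lemma can_bijective : bijective (can PBP PC rho).
Proof. exact: Bijective canK can_invK. Qed.

Lemma principal_extension : principal CC PP PC CP PPC CPP PBP Delta rho e.
Proof.
exists can_inv; split; [exact: canK | exact: can_invK | by move=> p; rewrite psi_canE rho_psi |].
exists phi; split; [by move=> w; rewrite psi_canE psiK | by move=> w; rewrite psi_canE phiK |].
exists sconn; split; [exact: sconn_lin | exact: sconn_e | exact: cantilde_sconn
  | exact: sconn_rcolinear | exact: sconn_lcolinear].
Qed.

End PrincipalExtension.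

Theorem mainTheorem9 (K : fieldType) (P : algType K) (C : lmodType K)
  (CC : tensor C C) (CCC : tensor C CC) (CP : tensor C P) (PC : tensor P C)
  (PP : tensor P P) (PCC : tensor P CC) (PPC : tensor P PC) (CPP : tensor C PP)
  (Delta : C -> tsp CC) (eps : C -> K^o) (psi : tsp CP -> tsp PC) (rho : P -> tsp PC)
  (e : C) (PBP : btensor (coinv PC rho)) :
  is_coalgebra CC CCC Delta eps ->
  coseparable CC Delta ->
  grouplike CC Delta eps e ->
  is_entwining CC PCC CP PC Delta eps psi ->
  is_entwined_coaction CC PCC CP PC Delta eps psi rho ->
  copointed CP PC psi rho e ->
  bijective psi ->
  (exists tau : C -> tsp PP, colifting PP PC rho tau) ->
  bijective (can PBP PC rho) /\
  principal CC PP PC CP PPC CPP PBP Delta rho e.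
Proof.
move=> [Delta_lin eps_lin coassoc counitl counitr]
  [delta [delta_lin delta_colinl delta_colinr delta_Delta]] [Delta_e eps_e]
  [psi_lin psi_mul psi_1 psi_Delta _] [rho_lin rho_coassoc rho_counit rhoM]
  rho_psi [phi psiK phiK] [tau [tau_lin cantilde_tau]].
split; [eapply can_bijective | eapply principal_extension]; eassumption.
Qed.
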